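(* Let $G$ be a group and let $A$ be a finite set. Then every subshift $X \subset A^G$ with bounded propagation is strongly irreducible and of finite type.
   Context: $A^G=\{x\colon G\to A\}$ carries the prodiscrete topology and the $G$-shift action $(gx)(h)=x(g^{-1}h)$; a subshift is a closed $G$-invariant subset. For $X\subset A^G$ and $\Omega\subset G$ finite, $X|_\Omega=\{x|_\Omega : x\in X\}\subset A^\Omega$. For a finite $\Delta\subset G$, $X$ has $\Delta$-propagation if: whenever $\Omega\subset G$ is finite and $p\in A^\Omega$ satisfies $p|_{\Omega\cap g\Delta}\in X|_{\Omega\cap g\Delta}$ for all $g\in G$, then $p\in X|_\Omega$. $X$ has bounded propagation if it has $\Delta$-propagation for some finite $\Delta\subset G$. $X$ is of finite type if there are finite $\Omega\subset G$ and $\mathcal P\subset A^\Omega$ with $X=\{x\in A^G:(gx)|_\Omega\in\mathcal P\ \forall g\in G\}$. $X$ is strongly irreducible if there is finite $\Delta\subset G$ such that for all finite $\Omega_1,\Omega_2\subset G$ with $\Omega_1\Delta^{-1}\cap\Omega_2=\varnothing$ and all $x_1,x_2\in X$ there is $x\in X$ with $x|_{\Omega_1}=x_1|_{\Omega_1}$, $x|_{\Omega_2}=x_2|_{\Omega_2}$. *)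

From Stdlib Require Import List.
Import ListNotations.

Record Group := {
  carrier :> Type;
  gmul : carrier -> carrier -> carrier;
  ginv : carrier -> carrier;
  gone : carrier;
  gmulA : forall x y z, gmul x (gmul y z) = gmul (gmul x y) z;
  gmul1 : forall x, gmul gone x = x;
  gmulV : forall x, gmul (ginv x) x = gone
}.

Definition finite_type (A : Type) : Prop := exists l : list A, forall a, In a l.

Section Shifts.
Variables (G : Group) (A : Type).

(* Configurations x : A^G; finite subsets of G are represented by lists.
   A pattern p in A^Omega is represented by any p : G -> A (only its values on
   Omega matter). *)
Definition agree_on (P : G -> Prop) (x y : G -> A) : Prop :=
  forall h, P h -> x h = y h.

Definition in_list (L : list G) : G -> Prop := fun h => In h L.

Definition ltrans (g : G) (D : list G) : G -> Prop :=
  fun h => exists d, In d D /\ h = gmul G g d.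

Definition shift (g : G) (x : G -> A) : G -> A := fun h => x (gmul G (ginv G g) h).

Definition in_restr (X : (G -> A) -> Prop) (S : G -> Prop) (p : G -> A) : Prop :=
  exists x, X x /\ agree_on S x p.

(* Closed in the prodiscrete topology: basic open sets are cylinders
   {y | y agrees with x on Omega}, Omega finite. *)
Definition prodiscrete_closed (X : (G -> A) -> Prop) : Prop :=
  forall x, (forall Om : list G, exists y, X y /\ agree_on (in_list Om) y x) -> X x.

Definition shift_invariant (X : (G -> A) -> Prop) : Prop :=
  forall g x, X x -> X (shift g x).

Definition subshift (X : (G -> A) -> Prop) : Prop :=
  prodiscrete_closed X /\ shift_invariant X.

Definition has_propagation (X : (G -> A) -> Prop) (D : list G) : Prop :=
  forall (Om : list G) (p : G -> A),
    (forall g, in_restr X (fun h => In h Om /\ ltrans g D h) p) ->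
    in_restr X (in_list Om) p.

Definition bounded_propagation (X : (G -> A) -> Prop) : Prop :=
  exists D : list G, has_propagation X D.

(* Finite type: a finite Omega and a set P of Omega-patterns (patterns are
   represented by functions G -> A, taken modulo agreement on Omega). *)
Definition finite_type_shift (X : (G -> A) -> Prop) : Prop :=
  exists (Om : list G) (P : (G -> A) -> Prop),
    forall x, X x <-> (forall g, exists q, P q /\ agree_on (in_list Om) (shift g x) q).

Definition strongly_irreducible (X : (G -> A) -> Prop) : Prop :=
  exists D : list G,
    forall (Om1 Om2 : list G),
      (forall w1 d w2, In w1 Om1 -> In d D -> In w2 Om2 -> gmul G w1 (ginv G d) <> w2) ->
      forall x1 x2, X x1 -> X x2 ->
        exists x, X x /\ agree_on (in_list Om1) x x1 /\ agree_on (in_list Om2) x x2.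

End Shifts.
Arguments subshift {G A} X.
Arguments bounded_propagation {G A} X.
Arguments strongly_irreducible {G A} X.
Arguments finite_type_shift {G A} X.

(** Gluing: if x1 and x2 are in X and the finite sets Om1, Om2 are far enough
    apart that no translate g D meets both, then the pattern equal to x1 on Om1
    and to x2 on Om2 is locally admissible on every g D, so D-propagation makes
    it globally admissible; this is strong irreducibility.  Finite type: take
    the D-patterns of X as allowed patterns.  A configuration all of whose
    D-windows are allowed is locally admissible on every finite Om, hence by
    propagation agrees on Om with a point of X, and X is closed. *)
From Stdlib Require Import List.
From Stdlib Require Import Classical ClassicalEpsilon.

Section GroupFacts.
Variable G : Group.

Lemma mulgV (x : G) : gmul G x (ginv G x) = gone G.
Proof.
  set (y := gmul G x (ginv G x)).
  assert (Hidem : gmul G y y = y).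
  { unfold y. rewrite <- gmulA, (gmulA G (ginv G x) x), gmulV, gmul1. reflexivity. }
  rewrite <- (gmulV G y). rewrite <- Hidem at 3. rewrite gmulA, gmulV, gmul1.
  reflexivity.
Qed.

Lemma mulg1 (x : G) : gmul G x (gone G) = x.
Proof. rewrite <- (gmulV G x), gmulA, mulgV, gmul1. reflexivity. Qed.

Lemma invgK (x : G) : ginv G (ginv G x) = x.
Proof.
  rewrite <- (mulg1 (ginv G (ginv G x))), <- (gmulV G x), gmulA, gmulV, gmul1.
  reflexivity.
Qed.

Lemma invg1 : ginv G (gone G) = gone G.
Proof. rewrite <- (gmul1 G (ginv G (gone G))). apply mulgV. Qed.

Lemma invMg (a b : G) : ginv G (gmul G a b) = gmul G (ginv G b) (ginv G a).
Proof.
  assert (Hright : gmul G (gmul G a b) (gmul G (ginv G b) (ginv G a)) = gone G).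
  { rewrite <- gmulA, (gmulA G b), mulgV, gmul1, mulgV. reflexivity. }
  rewrite <- (mulg1 (ginv G (gmul G a b))), <- Hright, gmulA, gmulV, gmul1.
  reflexivity.
Qed.

Lemma mulKg (g d : G) : gmul G (ginv G g) (gmul G g d) = d.
Proof. rewrite gmulA, gmulV, gmul1. reflexivity. Qed.

End GroupFacts.

Section Propagation.
Variables (G : Group) (A : Type) (X : (G -> A) -> Prop) (D : list G).
Hypothesis HD : has_propagation G A X D.

Definition glue (Om1 : list G) (x1 x2 : G -> A) : G -> A :=
  fun h => if excluded_middle_informative (In h Om1) then x1 h else x2 h.

Lemma agree_glue_l (Om1 : list G) (x1 x2 : G -> A) :
  agree_on G A (in_list G Om1) (glue Om1 x1 x2) x1.
Proof.
  intros h Hh. unfold glue.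
  destruct (excluded_middle_informative (In h Om1)); [reflexivity | contradiction].
Qed.

Lemma agree_glue_r (Om1 Om2 : list G) (x1 x2 : G -> A) :
  (forall h, In h Om1 -> ~ In h Om2) ->
  agree_on G A (in_list G Om2) (glue Om1 x1 x2) x2.
Proof.
  intros Hdisj h Hh. unfold glue.
  destruct (excluded_middle_informative (In h Om1)) as [H1 | _].
  - exfalso. exact (Hdisj h H1 Hh).
  - reflexivity.
Qed.

Lemma glue_locally_admissible (Om1 Om2 : list G) (x1 x2 : G -> A) :
  X x1 -> X x2 ->
  (forall g h1 h2, In h1 Om1 -> In h2 Om2 ->
     ltrans G g D h1 -> ltrans G g D h2 -> False) ->
  forall g, in_restr G A X (fun h => In h (Om1 ++ Om2) /\ ltrans G g D h)
                     (glue Om1 x1 x2).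
Proof.
  intros X1 X2 Hfar g.
  destruct (classic (exists h1, In h1 Om1 /\ ltrans G g D h1))
    as [[h1 [Hh1 Hg1]] | Hmiss].
  - exists x1. split; [exact X1 |]. intros h [Hin Hg].
    apply in_app_or in Hin. destruct Hin as [Hin | Hin].
    + symmetry. now apply agree_glue_l.
    + exfalso. exact (Hfar g h1 h Hh1 Hin Hg1 Hg).
  - exists x2. split; [exact X2 |]. intros h [Hin Hg].
    unfold glue. destruct (excluded_middle_informative (In h Om1)) as [H1 | _].
    + exfalso. apply Hmiss. now exists h.
    + reflexivity.
Qed.

(* w1 (d2^-1 d1)^-1 = w2 exactly when w1 = g d1 and w2 = g d2 for g := w1 d1^-1;
   the entry [gone] makes the two sets disjoint even when D is empty. *)
Definition difference_set : list G :=
  gone G :: map (fun pr => gmul G (ginv G (snd pr)) (fst pr)) (list_prod D D).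

Lemma separated_disjoint (Om1 Om2 : list G) :
  (forall w1 d w2, In w1 Om1 -> In d difference_set -> In w2 Om2 ->
     gmul G w1 (ginv G d) <> w2) ->
  forall h, In h Om1 -> ~ In h Om2.
Proof.
  intros Hsep h H1 H2. apply (Hsep h (gone G) h H1 (or_introl eq_refl) H2).
  rewrite invg1, mulg1. reflexivity.
Qed.

Lemma separated_no_common_translate (Om1 Om2 : list G) :
  (forall w1 d w2, In w1 Om1 -> In d difference_set -> In w2 Om2 ->
     gmul G w1 (ginv G d) <> w2) ->
  forall g h1 h2, In h1 Om1 -> In h2 Om2 ->
    ltrans G g D h1 -> ltrans G g D h2 -> False.
Proof.
  intros Hsep g h1 h2 H1 H2 [d1 [Hd1 E1]] [d2 [Hd2 E2]].
  refine (Hsep h1 (gmul G (ginv G d2) d1) h2 H1 _ H2 _).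
  - right. apply in_map_iff. exists (d1, d2). split; [reflexivity |].
    now apply in_prod.
  - subst h1 h2. rewrite invMg, invgK, <- gmulA, (gmulA G d1), mulgV, gmul1.
    reflexivity.
Qed.

Lemma propagation_strongly_irreducible : strongly_irreducible X.
Proof.
  exists difference_set. intros Om1 Om2 Hsep x1 x2 X1 X2.
  destruct (HD (Om1 ++ Om2) (glue Om1 x1 x2)) as [x [Xx Hx]].
  { apply glue_locally_admissible; [exact X1 | exact X2 |].
    exact (separated_no_common_translate Om1 Om2 Hsep). }
  exists x. split; [exact Xx | split].
  - intros h Hh. rewrite (Hx h (in_or_app _ _ _ (or_introl Hh))).
    now apply agree_glue_l.
  - intros h Hh. rewrite (Hx h (in_or_app _ _ _ (or_intror Hh))).
    exact (agree_glue_r Om1 Om2 x1 x2 (separated_disjoint Om1 Om2 Hsep) h Hh).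
Qed.

Hypothesis Hinv : shift_invariant G A X.

Lemma window_admissible (x : G -> A) (g : G) (Om : list G) :
  in_restr G A X (in_list G D) (shift G A (ginv G g) x) ->
  in_restr G A X (fun h => In h Om /\ ltrans G g D h) x.
Proof.
  intros [y [Xy Hy]]. exists (shift G A g y). split; [now apply Hinv |].
  intros h [_ [d [Hd E]]]. subst h. unfold shift.
  rewrite mulKg, (Hy d Hd). unfold shift. rewrite invgK. reflexivity.
Qed.

Lemma propagation_finite_type :
  prodiscrete_closed G A X -> finite_type_shift X.
Proof.
  intros Hcl. exists D, (in_restr G A X (in_list G D)). intro x. split.
  - intros Xx g. exists (shift G A g x). split; [| intros h _; reflexivity].
    exists (shift G A g x). split; [now apply Hinv | intros h _; reflexivity].
  - intros Hloc. apply Hcl. intro Om.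
    destruct (HD Om x) as [y [Xy Hy]]; [| now exists y].
    intro g. apply window_admissible.
    destruct (Hloc (ginv G g)) as [q [[y [Xy Hyq]] Hq]].
    exists y. split; [exact Xy |]. intros h Hh. now rewrite Hyq, Hq.
Qed.

End Propagation.

Theorem proposition2p9 (G : Group) (A : Type) (hA : finite_type A)
  (X : (G -> A) -> Prop) :
  subshift X -> bounded_propagation X ->
  strongly_irreducible X /\ finite_type_shift X.
Proof.
  intros [Hcl Hinv] [D HD]. split.
  - exact (propagation_strongly_irreducible G A X D HD).
  - exact (propagation_finite_type G A X D HD Hinv Hcl).
Qed.
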